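(* Let $\mathbf{M}$ be a nonsingular $D\times D$ integer matrix and $\bm{\Gamma}_1,\dots,\bm{\Gamma}_L$ ($L\ge2$) nonsingular $D\times D$ integer matrices that are pairwise commutative and coprime; set $\mathbf{M}_i=\mathbf{M}\bm{\Gamma}_i$. Let $\mathbf{U}\mathbf{M}\mathbf{V}=\bm{\Lambda}$ be a Smith normal form decomposition ($\mathbf{U},\mathbf{V}$ unimodular, $\bm{\Lambda}$ diagonal). Fix unimodular $\mathbf{U}_1$ and let $\mathbf{m}\in\mathcal{A}_1$ with remainders $\mathbf{r}_i=\langle\mathbf{m}\rangle_{\mathbf{M}_i}$ and folding vectors $\mathbf{n}_i$ ($\mathbf{m}=\mathbf{M}_i\mathbf{n}_i+\mathbf{r}_i$). Let $\widetilde{\mathbf{r}}_i=\mathbf{r}_i+\triangle\mathbf{r}_i\in\mathbb{Z}^D$ be erroneous remainders and let $\widetilde{\mathbf{n}}_1,\dots,\widetilde{\mathbf{n}}_L$ be the output of Algorithm 2. Define $\bm{\vartheta}_i=Q_{\bm{\Lambda}}(\mathbf{U}(\triangle\mathbf{r}_i-\triangle\mathbf{r}_1))$, $2\le i\le L$. Then $\widetilde{\mathbf{n}}_i=\mathbf{n}_i$ for all $i$ if and only if $\bm{\vartheta}_i=\mathbf{0}$ for all $2\le i\le L$. Moreover: (1) if $\lVert\mathbf{U}(\triangle\mathbf{r}_i-\triangle\mathbf{r}_1)\rVert<\lambda_{\mathrm{LAT}(\bm{\Lambda})}/2$ for all $2\le i\le L$, then all $\bm{\vartheta}_i=\mathbf{0}$;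 (2) if $\lVert\triangle\mathbf{r}_i\rVert\le\tau$ for all $i$ and $\tau<\lambda_{\mathrm{LAT}(\bm{\Lambda})}/(4\lVert\mathbf{U}\rVert_* )$, then all $\bm{\vartheta}_i=\mathbf{0}$. When the folding vectors are correctly determined, $\widetilde{\mathbf{m}}=\frac1L\sum_{i=1}^L(\mathbf{M}_i\mathbf{n}_i+\widetilde{\mathbf{r}}_i)$ satisfies $\lVert\widetilde{\mathbf{m}}-\mathbf{m}\rVert\le\tau$ whenever $\lVert\triangle\mathbf{r}_i\rVert\le\tau$ for all $i$.
   Context: All matrices are $D\times D$; unimodular means integer with determinant $\pm1$; commuting nonsingular integer matrices are coprime if all their common left (equivalently right) divisors are unimodular. $\mathrm{LAT}(\mathbf{A})=\{\mathbf{A}\mathbf{n}:\mathbf{n}\in\mathbb{Z}^D\}$. $\mathcal{N}(\mathbf{A})=\{\mathbf{k}\in\mathbb{Z}^D:\mathbf{k}=\mathbf{A}\mathbf{x},\ \mathbf{x}\in[0,1)^D\}$; $\langle\mathbf{m}\rangle_{\mathbf{A}}$ is the unique $\mathbf{r}\in\mathcal{N}(\mathbf{A})$ with $\mathbf{m}-\mathbf{r}\in\mathrm{LAT}(\mathbf{A})$; $\mathbf{x}\equiv\mathbf{y}\bmod\mathbf{A}$ means $\mathbf{x}-\mathbf{y}\in\mathrm{LAT}(\mathbf{A})$. $\mathcal{A}_1=\{\mathbf{m}\in\mathbb{Z}^D:\lfloor\mathbf{M}_1^{-1}\mathbf{m}\rfloor\in\mathcal{N}(\bm{\Gamma}_2\cdots\bm{\Gamma}_L\mathbf{U}_1)\}$.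 $\lVert\cdot\rVert$ is a fixed norm on $\mathbb{R}^D$, $\lVert\mathbf{U}\rVert_*=\sup_{\lVert\mathbf{x}\rVert=1}\lVert\mathbf{U}\mathbf{x}\rVert$, and $\lambda_{\mathrm{LAT}(\bm{\Lambda})}=\min\{\lVert\mathbf{v}\rVert:\mathbf{v}\in\mathrm{LAT}(\bm{\Lambda})\setminus\{\mathbf{0}\}\}$. $Q_{\bm{\Lambda}}:\mathbb{R}^D\to\mathrm{LAT}(\bm{\Lambda})$ is a fixed closest-lattice-point map ($Q_{\bm{\Lambda}}(\mathbf{w})\in\arg\min_{\mathbf{p}\in\mathrm{LAT}(\bm{\Lambda})}\lVert\mathbf{p}-\mathbf{w}\rVert$) with $Q_{\bm{\Lambda}}(\mathbf{w}+\mathbf{l})=Q_{\bm{\Lambda}}(\mathbf{w})+\mathbf{l}$ for $\mathbf{l}\in\mathrm{LAT}(\bm{\Lambda})$. Algorithm 2: (i) $\mathbf{p}_i=Q_{\bm{\Lambda}}(\mathbf{U}(\widetilde{\mathbf{r}}_i-\widetilde{\mathbf{r}}_1))$, $2\le i\le L$; (ii) $\bm{\varpi}_i=\langle\bm{\Lambda}^{-1}\mathbf{p}_i\rangle_{\mathbf{V}^{-1}\bm{\Gamma}_i}$; (iii) $\bm{\psi}_1$ is the unique element of $\mathcal{N}(\mathbf{V}^{-1}\bm{\Gamma}_1\bm{\Gamma}_2\cdots\bm{\Gamma}_L\mathbf{U}_1)$ with $\bm{\psi}_1\equiv\mathbf{0}\bmod\mathbf{V}^{-1}\bm{\Gamma}_1$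 and $\bm{\psi}_1\equiv\bm{\varpi}_i\bmod\mathbf{V}^{-1}\bm{\Gamma}_i$ for $2\le i\le L$; (iv) $\widetilde{\mathbf{n}}_1=\bm{\Gamma}_1^{-1}\mathbf{V}\bm{\psi}_1$ and $\widetilde{\mathbf{n}}_i=\bm{\Gamma}_i^{-1}\mathbf{V}(\bm{\psi}_1-\bm{\Lambda}^{-1}\mathbf{p}_i)$ for $2\le i\le L$. *)

From HB Require Import structures.
From mathcomp Require Import all_boot all_order all_algebra.
Set Implicit Arguments. Unset Strict Implicit. Unset Printing Implicit Defensive.
Import Order.TTheory GRing.Theory Num.Theory.
Local Open Scope ring_scope.

Section Defs.
Context {R : archiRealFieldType}.
Context {D : nat}.

Definition toR {m n} (A : 'M[int]_(m, n)) : 'M[R]_(m, n) := map_mx intr A.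

Definition nonsingular (A : 'M[int]_D) : Prop := \det A != 0.
Definition unimodular (A : 'M[int]_D) : Prop := (\det A = 1) \/ (\det A = -1).

Definition mx_coprime (A B : 'M[int]_D) : Prop :=
  forall C X Y : 'M[int]_D, A = C *m X -> B = C *m Y -> unimodular C.

Definition smith_diag (Lam : 'M[int]_D) : Prop :=
  is_diag_mx Lam /\ (forall i : 'I_D, 0 <= Lam i i) /\
  (forall i j : 'I_D, (i <= j)%N -> (Lam i i %| Lam j j)%Z).

Definition inLat (A : 'M[R]_D) (v : 'cV[R]_D) : Prop :=
  exists n : 'cV[int]_D, v = A *m toR n.

Definition inN (A : 'M[R]_D) (k : 'cV[int]_D) : Prop :=
  exists x : 'cV[R]_D, (forall j : 'I_D, 0 <= x j 0 < 1) /\ toR k = A *m x.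

Definition isRem (A : 'M[R]_D) (m : 'cV[R]_D) (r : 'cV[int]_D) : Prop :=
  inN A r /\ inLat A (m - toR r).

Definition floorv (x : 'cV[R]_D) : 'cV[int]_D := map_mx (@Num.floor R) x.

Definition is_norm (nrm : 'cV[R]_D -> R) : Prop :=
  (forall x, 0 <= nrm x) /\ (forall x, nrm x = 0 -> x = 0) /\
  (forall (a : R) x, nrm (a *: x) = `|a| * nrm x) /\
  (forall x y, nrm (x + y) <= nrm x + nrm y).

Definition is_opnorm (nrm : 'cV[R]_D -> R) (A : 'M[R]_D) (c : R) : Prop :=
  (forall x, nrm x = 1 -> nrm (A *m x) <= c) /\
  (forall c', (forall x, nrm x = 1 -> nrm (A *m x) <= c') -> c <= c').

Definition is_lat_min (nrm : 'cV[R]_D -> R) (A : 'M[R]_D) (lam : R) : Prop :=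
  (exists v, inLat A v /\ v != 0 /\ nrm v = lam) /\
  (forall v, inLat A v -> v != 0 -> lam <= nrm v).

Definition is_closest_map (nrm : 'cV[R]_D -> R) (A : 'M[R]_D)
  (Q : 'cV[R]_D -> 'cV[R]_D) : Prop :=
  (forall w, inLat A (Q w)) /\
  (forall w p, inLat A p -> nrm (Q w - w) <= nrm (p - w)) /\
  (forall w l, inLat A l -> Q (w + l) = Q w + l).

End Defs.

(* Put w_i := V^-1 (Gam_0 n_0 - Gam_i n_i).  Since U M V = Lam, the true
   remainder differences satisfy U (r_i - r_0) = Lam w_i, a point of LAT(Lam),
   so translation equivariance of Q gives p_i = theta_i + Lam w_i.  If every
   theta_i vanishes, Algorithm 2 recovers Lam^-1 p_i = w_i exactly, and then
   psi_1 and V^-1 Gam_0 n_0 are two points of N(V^-1 Gam_0 ... Gam_(L-1) U_1)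
   that are congruent modulo each V^-1 Gam_j.  A matrix Bezout identity, read
   off the Smith form of [Gam_i Gam_j], makes commuting coprime matrices behave
   like coprime integers, so the congruences combine into one modulo the
   product and the two points coincide; this yields the true folding vectors.
   Conversely, correct folding vectors force Lam^-1 theta_i = 0.  The sufficient
   conditions are the packing-radius property of a closest-point map, and the
   final estimate is the triangle inequality for an average. *)

From HB Require Import structures.
From mathcomp Require Import all_boot all_order all_algebra.
From mathcomp Require Import ring zify lra.
Import Order.TTheory GRing.Theory Num.Theory.
Set Implicit Arguments. Unset Strict Implicit. Unset Printing Implicit Defensive.
Local Open Scope ring_scope.

Section IntegerMatrices.
Variable D : nat.
Implicit Types A B C E F : 'M[int]_D.

Lemma unimodular_unitmx A : unimodular A -> A \in unitmx.
Proof. by rewrite unitmxE => -[] ->; rewrite ?unitr1 ?unitrN1. Qed.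

Lemma unitmx_det_neq0 A : A \in unitmx -> \det A != 0.
Proof. by rewrite unitmxE; apply: contraTN => /eqP ->; rewrite unitr0. Qed.

Lemma unimodular_det_neq0 A : unimodular A -> \det A != 0.
Proof. by move/unimodular_unitmx/unitmx_det_neq0. Qed.

(* The Smith form [A B] = L [C 0] R' exhibits a common left divisor C of A
   and B; coprimality makes C, hence [C 0; 0 1] R', unimodular. *)
Lemma mx_coprime_completion A B :
  mx_coprime A B -> exists E F, \det (block_mx A B E F) \is a GRing.unit.
Proof.
move=> coAB.
have [Lm uLm [Rm uRm [d _ ABE]]] := int_Smith_normal_form (row_mx A B).
set Del := \matrix_(i, j) _ in ABE.
have DelE : Del = row_mx (lsubmx Del) 0.
  rewrite -{1}(hsubmxK Del); congr row_mx; apply/matrixP => i j.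
  rewrite !mxE /=; case: eqP => // ij.
  by have := ltn_ord i; rewrite ij ltnNge leq_addr.
set C := Lm *m lsubmx Del.
have /eq_row_mx[AE BE] : row_mx A B = row_mx (C *m ulsubmx Rm) (C *m ursubmx Rm).
  rewrite -mul_mx_row ABE DelE -{1}(vsubmxK Rm) -mulmxA mul_row_col mul0mx.
  by rewrite addr0 mulmxA /ulsubmx /ursubmx hsubmxK.
have uC := unimodular_unitmx (coAB _ _ _ AE BE).
exists (dlsubmx Rm), (drsubmx Rm).
have -> : block_mx A B (dlsubmx Rm) (drsubmx Rm) = block_mx C 0 0 1%:M *m Rm.
  rewrite -[in RHS](submxK Rm) mulmx_block !mul0mx !mul1mx !addr0 !add0r.
  by rewrite -AE -BE.
by rewrite det_mulmx det_ublock det1 mulr1 unitrM -!unitmxE uC uRm.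
Qed.

(* Right-multiplying by [1 B; 0 -A] clears the top right block because A and
   B commute, leaving the Schur-type complement E B - F A. *)
Lemma bezout_of_unit_completion A B E F :
  \det A != 0 -> A *m B = B *m A -> \det (block_mx A B E F) \is a GRing.unit ->
  exists P S, P *m B - S *m A = 1%:M.
Proof.
move=> dA AB uW; set T := E *m B - F *m A.
have WE : block_mx A B E F *m block_mx 1%:M B 0 (- A) = block_mx A 0 E T.
  by rewrite mulmx_block !mulmx1 !mulmx0 !addr0 !mulmxN AB subrr.
have uT : T \in unitmx.
  have := congr1 determinant WE.
  rewrite det_mulmx det_ublock det_lblock det1 mul1r -scaleN1r detZ => dWE.
  have : \det A * \det T = \det A * (\det (block_mx A B E F) * (-1) ^+ D).
    by rewrite -dWE; ring.
  by move/(mulfI dA); rewrite unitmxE => ->; rewrite unitrM uW unitrX ?unitrN1.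
by exists (invmx T *m E), (invmx T *m F); rewrite -!mulmxA -mulmxBr mulVmx.
Qed.

Lemma mx_coprime_bezout A B :
  \det A != 0 -> A *m B = B *m A -> mx_coprime A B ->
  exists P S, P *m B - S *m A = 1%:M.
Proof.
move=> dA AB /mx_coprime_completion[E [F uW]].
exact: bezout_of_unit_completion uW.
Qed.

(* Gauss's lemma: the adjugate of A commutes with B, which lets the Bezout
   identity act on a. *)
Lemma mx_coprime_dvd A B (a b : 'cV[int]_D) :
  \det A != 0 -> A *m B = B *m A -> mx_coprime A B ->
  A *m a = B *m b -> exists z, a = B *m z.
Proof.
move=> dA AB coAB Eab; have [P [S PS]] := mx_coprime_bezout dA AB coAB.
have adjB : B *m \adj A = \adj A *m B.
  apply/eqP; rewrite -subr_eq0.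
  suff : \det A *: (B *m \adj A - \adj A *m B) == 0.
    by rewrite scalemx_eq0 (negbTE dA).
  rewrite -mul_scalar_mx -mul_adj_mx -mulmxA mulmxBr !mulmxA AB -(mulmxA B).
  by rewrite !mul_mx_adj mul_mx_scalar mul_scalar_mx subrr mulmx0.
have Badj : B *m (\adj A *m b) = \det A *: a.
  by rewrite mulmxA adjB -mulmxA -Eab mulmxA mul_adj_mx mul_scalar_mx.
have adjE : \adj A *m b = \det A *: (P *m a - S *m b).
  rewrite -[LHS]mul1mx -PS mulmxBl -!mulmxA Badj (mulmxA A) mul_mx_adj.
  by rewrite mul_scalar_mx -!scalemxAr scalerBr.
exists (P *m a - S *m b); apply/eqP; rewrite eq_sym -subr_eq0.
suff : \det A *: (B *m (P *m a - S *m b) - a) == 0.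
  by rewrite scalemx_eq0 (negbTE dA).
by rewrite scalerBr scalemxAr -adjE Badj subrr.
Qed.

Section BigProduct.
Variables (I : eqType) (G : I -> 'M[int]_D).
Local Notation prodG s := (\big[mulmx/1%:M]_(i <- s) G i).

Lemma bigmulmx_det_neq0 s :
  (forall i, i \in s -> \det (G i) != 0) -> \det (prodG s) != 0.
Proof.
move=> dG; rewrite big_seq.
apply: (big_ind (fun X : 'M_D => \det X != 0)) => [|X Y dX dY|//].
  by rewrite det1 oner_neq0.
by rewrite det_mulmx mulf_neq0.
Qed.

Lemma bigmulmx_comm s B :
  (forall i, i \in s -> G i *m B = B *m G i) -> prodG s *m B = B *m prodG s.
Proof.
move=> cG; rewrite big_seq.
apply: (big_ind (fun X : 'M_D => X *m B = B *m X)) => [|X Y cX cY|//].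
  by rewrite mulmx1 mul1mx.
by rewrite -mulmxA cY !mulmxA cX.
Qed.

Lemma bigmulmx_dvd_cancel s B (a c : 'cV[int]_D) :
  (forall i, i \in s ->
     [/\ \det (G i) != 0, G i *m B = B *m G i & mx_coprime (G i) B]) ->
  prodG s *m a = B *m c -> exists z, a = B *m z.
Proof.
elim: s a c => [|i s IH] a c hs; first by rewrite big_nil mul1mx => ->; exists c.
rewrite big_cons -mulmxA => Ea.
have [dGi cGi coGi] := hs i (mem_head i s).
have [z Ez] := mx_coprime_dvd dGi cGi coGi Ea.
by apply: (IH _ z) => // j js; apply: hs; rewrite in_cons js orbT.
Qed.

Lemma bigmulmx_dvd s (x : 'cV[int]_D) :
  uniq s -> (forall i, i \in s -> \det (G i) != 0) ->
  (forall i j, i \in s -> j \in s -> i != j ->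
     G i *m G j = G j *m G i /\ mx_coprime (G i) (G j)) ->
  (forall i, i \in s -> exists c, x = G i *m c) ->
  exists c, x = prodG s *m c.
Proof.
elim: s => [|j s IH] ujs dG cG hx; first by exists x; rewrite big_nil mul1mx.
have /andP[js us] := ujs.
have sub_s i : i \in s -> i \in j :: s by rewrite in_cons => ->; rewrite orbT.
have neq_j i : i \in s -> i != j.
  by move=> si; apply: contraNneq js => <-.
have [c' Ec'] := IH us (fun i si => dG i (sub_s i si))
  (fun i k si ks => cG i k (sub_s i si) (sub_s k ks)) (fun i si => hx i (sub_s i si)).
have [c'' Ec''] := hx j (mem_head j s).
have [z Ez] : exists z, c' = G j *m z.
  apply: (@bigmulmx_dvd_cancel s (G j) c' c'') => [i si|]; last first.
    by rewrite -Ec' -Ec''.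
  have [Gij coij] := cG i j (sub_s i si) (mem_head j s) (neq_j i si).
  by split=> //; apply: dG; apply: sub_s.
exists z; rewrite Ec' Ez big_cons mulmxA bigmulmx_comm // => i si.
by case: (cG i j (sub_s i si) (mem_head j s) (neq_j i si)).
Qed.

End BigProduct.
End IntegerMatrices.

Section IntegerPoints.
Variable R : archiRealFieldType.
Local Notation toR := (@toR R _ _).

Lemma toR_mul m n p (A : 'M[int]_(m, n)) (B : 'M[int]_(n, p)) :
  toR (A *m B) = toR A *m toR B.
Proof. exact: map_mxM. Qed.

Lemma toR_add m n (A B : 'M[int]_(m, n)) : toR (A + B) = toR A + toR B.
Proof. exact: map_mxD. Qed.

Lemma toR_sub m n (A B : 'M[int]_(m, n)) : toR (A - B) = toR A - toR B.
Proof. exact: map_mxB. Qed.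

Lemma toR1 n : toR (1%:M : 'M[int]_n) = 1%:M.
Proof. exact: map_mx1. Qed.

Lemma toR_inj m n (A B : 'M[int]_(m, n)) : toR A = toR B -> A = B.
Proof.
by move/matrixP => AB; apply/matrixP => i j; have := AB i j; rewrite !mxE => /intr_inj.
Qed.

Lemma toR_unitmx n (A : 'M[int]_n) : \det A != 0 -> toR A \in unitmx.
Proof. by rewrite unitmxE det_map_mx unitfE intr_eq0. Qed.

Lemma toR_invmx n (A : 'M[int]_n) : A \in unitmx -> invmx (toR A) = toR (invmx A).
Proof.
move=> uA; have uRA : toR A \in unitmx.
  by apply: toR_unitmx; move: uA; rewrite unitmxE; apply: contraTN => /eqP ->.
by rewrite -[LHS]mulmx1 -(toR1 n) -(mulmxV uA) toR_mul mulmxA mulVmx // mul1mx.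
Qed.

Variable D : nat.
Implicit Types (A : 'M[int]_D) (u v k : 'cV[int]_D).

Lemma inLat_toR A v : inLat (toR A) (toR v) -> exists k, v = A *m k.
Proof. by case=> k; rewrite -toR_mul => /toR_inj ->; exists k. Qed.

(* Two points of N(A) differ by A x with x in (-1,1)^D, so they cannot differ
   by a nonzero lattice vector. *)
Lemma inN_uniq A u v k :
  \det A != 0 -> inN (toR A) u -> inN (toR A) v -> u - v = A *m k -> u = v.
Proof.
move=> dA [x [x01 uE]] [y [y01 vE]] uvE.
have uA := toR_unitmx dA.
have xyE : x - y = toR k.
  by rewrite -[x - y](mulKmx uA) mulmxBr -uE -vE -toR_sub uvE toR_mul mulKmx.
suff k0 : k = 0 by apply/eqP; rewrite -subr_eq0 uvE k0 mulmx0.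
apply/matrixP => i j; rewrite mxE (ord1 j).
have kiE : x i 0 - y i 0 = (k i 0)%:~R.
  by have := congr1 (fun w : 'cV[R]_D => w i 0) xyE; rewrite !mxE.
have /andP[y0 y1] := y01 i; have /andP[x0 x1] := x01 i.
have k_lt1 : (k i 0)%:~R < (1 : R) by rewrite -kiE; lra.
have k_gtN1 : (-1 : R) < (k i 0)%:~R by rewrite -kiE; lra.
by move: k_lt1 k_gtN1; rewrite -[1 : R]/((1 : int)%:~R) -intrN !ltr_int; lia.
Qed.

Lemma floorv_folding A k v :
  \det A != 0 -> inN (toR A) v -> floorv (invmx (toR A) *m toR (A *m k + v)) = k.
Proof.
move=> dA [x [x01 vE]].
rewrite toR_add toR_mul vE -mulmxDr mulKmx ?toR_unitmx //.
apply/matrixP => i j; rewrite !mxE (ord1 j); apply/eqP.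
by rewrite floor_eq intrD; have /andP[x0 x1] := x01 i; apply/andP; split; lra.
Qed.

End IntegerPoints.

Section Norms.
Variables (R : archiRealFieldType) (D : nat) (nrm : 'cV[R]_D -> R).
Hypothesis nrm_norm : is_norm nrm.

Lemma normv_ge0 x : 0 <= nrm x.
Proof. by case: nrm_norm. Qed.

Lemma normvZ a x : nrm (a *: x) = `|a| * nrm x.
Proof. by case: nrm_norm => _ [_ []]. Qed.

Lemma normvD_le x y : nrm (x + y) <= nrm x + nrm y.
Proof. by case: nrm_norm => _ [_ []]. Qed.

Lemma normv0 : nrm 0 = 0.
Proof. by rewrite -(scale0r (0 : 'cV[R]_D)) normvZ normr0 mul0r. Qed.

Lemma normvN x : nrm (- x) = nrm x.
Proof. by rewrite -scaleN1r normvZ normrN normr1 mul1r. Qed.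

Lemma normvB_le x y : nrm (x - y) <= nrm x + nrm y.
Proof. by rewrite -(normvN y) normvD_le. Qed.

Lemma normv_avg_le (f : nat -> 'cV[R]_D) L tau :
  (0 < L)%N -> (forall i, (i < L)%N -> nrm (f i) <= tau) ->
  nrm (L%:R^-1 *: \sum_(0 <= i < L) f i) <= tau.
Proof.
move=> L_gt0 f_le; have L_gt0R : 0 < L%:R :> R by rewrite ltr0n.
have sum_le : nrm (\sum_(0 <= i < L) f i) <= \sum_(0 <= i < L) tau.
  rewrite big_seq [X in _ <= X]big_seq.
  apply: (big_ind2 (fun u t => nrm u <= t)) => [|u1 t1 u2 t2 le1 le2|i].
  - by rewrite normv0.
  - by apply: le_trans (normvD_le _ _) _; apply: lerD.
  - by rewrite mem_index_iota => /andP[_]; apply: f_le.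
rewrite normvZ ger0_norm ?invr_ge0 ?ler0n // -(ler_pM2l L_gt0R) mulrA.
by rewrite mulfV ?gt_eqF // mul1r mulr_natl -[L in tau *+ L]subn0 -sumr_const_nat.
Qed.

Lemma opnorm_le A c x : is_opnorm nrm A c -> nrm (A *m x) <= c * nrm x.
Proof.
case=> unit_le _; have [x0|x_neq0] := eqVneq (nrm x) 0.
  rewrite x0 mulr0; case: nrm_norm => _ [/(_ x x0) -> _].
  by rewrite mulmx0 normv0.
have x_gt0 : 0 < nrm x by rewrite lt_def x_neq0 normv_ge0.
have := unit_le ((nrm x)^-1 *: x).
rewrite -scalemxAr !normvZ ger0_norm ?invr_ge0 ?normv_ge0 // mulVf // => /(_ erefl).
by rewrite ler_pdivrMl // mulrC.
Qed.

Lemma lat_min_ge0 A lam : is_lat_min nrm A lam -> 0 <= lam.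
Proof. by case=> -[v [_ [_ <-]]] _; apply: normv_ge0. Qed.

(* Q w is at least as close to w as 0 is, so a nonzero Q w would be a lattice
   vector of norm at most 2 nrm w < lam. *)
Lemma closest_map_eq0 A Q lam w :
  is_closest_map nrm A Q -> is_lat_min nrm A lam -> nrm w < lam / 2 -> Q w = 0.
Proof.
move=> [Q_lat [Q_min _]] [_ lam_min] w_lt.
have Qw_le : nrm (Q w - w) <= nrm w.
  have := Q_min w 0; rewrite sub0r normvN; apply.
  by exists 0; rewrite /toR map_mx0 mulmx0.
have Qw_le' : nrm (Q w) <= nrm (Q w - w) + nrm w.
  by rewrite -[X in nrm X <= _](subrK w) normvD_le.
apply/eqP; apply: contraT => Qw_neq0; have := lam_min _ (Q_lat w) Qw_neq0; lra.
Qed.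

Lemma opnorm_diff_lt A c lam tau x y :
  is_opnorm nrm A c -> 0 <= lam -> nrm x <= tau -> nrm y <= tau ->
  tau < lam / (4 * c) -> nrm (A *m (x - y)) < lam / 2.
Proof.
move=> A_c lam_ge0 x_le y_le tau_lt.
have tau_ge0 : 0 <= tau := le_trans (normv_ge0 x) x_le.
(* for c <= 0 the bound lam / (4 c) is <= 0 (it is 0 when c = 0) *)
have c_gt0 : 0 < c.
  rewrite ltNge; apply/negP => c_le0.
  have : lam / (4 * c) <= 0 by apply: mulr_ge0_le0; rewrite // invr_le0; lra.
  lra.
have ctau_lt : c * tau < lam / 4.
  have -> : lam / 4 = c * (lam / (4 * c)) by field; rewrite gt_eqF.
  by rewrite ltr_pM2l.
have xy_le : c * nrm (x - y) <= c * (2 * tau).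
  by rewrite ler_pM2l //; apply: le_trans (normvB_le _ _) _; lra.
have := opnorm_le (x - y) A_c; lra.
Qed.

End Norms.

Section Algorithm2.
Variable R : archiRealFieldType.
Variables (D L : nat) (M U V Lam U1 : 'M[int]_D) (Gam : nat -> 'M[int]_D).
Variables (Q : 'cV[R]_D -> 'cV[R]_D) (m psi1 : 'cV[int]_D).
Variables (r n dr varpi : nat -> 'cV[int]_D).

Local Notation toR := (@toR R _ _).
Local Notation Gprod := (\big[mulmx/1%:M]_(1 <= i < L) Gam i).
Local Notation rt i := (r i + dr i).
Local Notation p i := (Q (toR U *m toR (rt i - rt 0%N))).
Local Notation Vinv := (invmx (toR V)).
Local Notation theta i := (Q (toR U *m toR (dr i - dr 0%N))).
Local Notation nt := (fun i => if i == 0%N then invmx (toR (Gam 0%N)) *m toR V *m toR psi1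
  else invmx (toR (Gam i)) *m toR V *m (toR psi1 - invmx (toR Lam) *m p i)).

Hypothesis L_gt0 : (0 < L)%N.
Hypothesis M_nonsingular : nonsingular M.
Hypothesis Gam_nonsingular : forall i, (i < L)%N -> nonsingular (Gam i).
Hypothesis Gam_comm_coprime : forall i j, (i < L)%N -> (j < L)%N -> i <> j ->
  Gam i *m Gam j = Gam j *m Gam i /\ mx_coprime (Gam i) (Gam j).
Hypotheses (U_unimodular : unimodular U) (V_unimodular : unimodular V).
Hypothesis U1_unimodular : unimodular U1.
Hypothesis smithE : U *m M *m V = Lam.
Hypothesis Q_translate : forall w l, inLat (toR Lam) l -> Q (w + l) = Q w + l.
Hypothesis m_in_A1 :
  inN (toR (Gprod *m U1)) (floorv (invmx (toR (M *m Gam 0%N)) *m toR m)).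
Hypothesis r0_rem : isRem (toR (M *m Gam 0%N)) (toR m) (r 0%N).
Hypothesis folding : forall i, (i < L)%N -> m = M *m Gam i *m n i + r i.
Hypothesis varpi_rem : forall i, (1 <= i < L)%N ->
  isRem (Vinv *m toR (Gam i)) (invmx (toR Lam) *m p i) (varpi i).
Hypothesis psi1_in_N : inN (Vinv *m toR (Gam 0%N) *m toR Gprod *m toR U1) psi1.
Hypothesis psi1_lat0 : inLat (Vinv *m toR (Gam 0%N)) (toR psi1).
Hypothesis psi1_lat : forall i, (1 <= i < L)%N ->
  inLat (Vinv *m toR (Gam i)) (toR psi1 - toR (varpi i)).

Local Notation Vi := (invmx V).
Local Notation psi1_true := (Vi *m Gam 0%N *m n 0%N).
(* [w i] is what [Lam^-1 p i] equals when [theta i = 0]. *)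
Local Notation w i := (psi1_true - Vi *m Gam i *m n i).

Let V_unitmx : V \in unitmx := unimodular_unitmx V_unimodular.
Let Vinv_toR : Vinv = toR Vi := toR_invmx R V_unitmx.
Let V_unitmxR : toR V \in unitmx := toR_unitmx R (unitmx_det_neq0 V_unitmx).

Lemma Lam_nonsingular : \det Lam != 0.
Proof.
rewrite -smithE !det_mulmx !mulf_neq0 //; exact: unimodular_det_neq0.
Qed.

Lemma remainder_diffE i : (i < L)%N -> U *m (r i - r 0%N) = Lam *m w i.
Proof.
move=> iL; have rE j : (j < L)%N -> r j = m - M *m Gam j *m n j.
  by move=> jL; rewrite {1}(folding jL) addrAC subrr add0r.
rewrite (rE i iL) (rE 0%N L_gt0) opprB addrC addrA subrK.
by rewrite -smithE !mulmxBr !mulmxA !mulmxK.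
Qed.

Lemma invLam_pE i : (i < L)%N ->
  invmx (toR Lam) *m p i = invmx (toR Lam) *m theta i + toR (w i).
Proof.
move=> iL; have Lam_unitmx := toR_unitmx R Lam_nonsingular.
have -> : toR U *m toR (rt i - rt 0%N) =
    toR U *m toR (dr i - dr 0%N) + toR Lam *m toR (w i).
  rewrite -!toR_mul -toR_add -remainder_diffE // -mulmxDr.
  by congr (toR (U *m _)); rewrite opprD addrACA addrC.
by rewrite Q_translate ?mulmxDr ?mulKmx //; exists (w i).
Qed.

Lemma folding_recovered_iff i z : (i < L)%N ->
  (invmx (toR (Gam i)) *m toR V *m z = toR (n i)) <-> z = toR (Vi *m Gam i *m n i).
Proof.
move=> iL; have Gam_unitmx := toR_unitmx R (Gam_nonsingular iL).
by rewrite !toR_mul -Vinv_toR; split => [<-|->]; rewrite -!mulmxA mulKVmx // mulKmx.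
Qed.

Lemma theta_eq0_of_folding :
  (forall i, (i < L)%N -> nt i = toR (n i)) ->
  forall i, (1 <= i < L)%N -> theta i = 0.
Proof.
move=> nt_ok i /andP[i_ge1 iL].
have := nt_ok 0%N L_gt0; rewrite eqxx => /(folding_recovered_iff _ L_gt0) psi1E.
have := nt_ok i iL; rewrite -[i == 0%N]negbK -lt0n i_ge1 /= => /(folding_recovered_iff _ iL).
rewrite psi1E => ntE.
have : invmx (toR Lam) *m p i = toR (w i).
  by rewrite [in RHS]toR_sub -ntE [in RHS]opprB [in RHS]addrC subrK.
rewrite invLam_pE // -[X in _ = X]add0r => /addIr Ltheta0.
have Lam_unitmx := toR_unitmx R Lam_nonsingular.
by rewrite -(mulKVmx Lam_unitmx (theta i)) Ltheta0 mulmx0.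
Qed.

Section CorrectFolding.
Hypothesis theta_eq0 : forall i, (1 <= i < L)%N -> theta i = 0.

Lemma recovered_diffE i : (1 <= i < L)%N -> invmx (toR Lam) *m p i = toR (w i).
Proof.
move=> /andP[i_ge1 iL].
by rewrite invLam_pE // theta_eq0 ?i_ge1 // mulmx0 add0r.
Qed.

Lemma psi1_congr_Gam j : (j < L)%N -> exists c, psi1 - psi1_true = Vi *m Gam j *m c.
Proof.
move=> jL; have [->|j_gt0] := posnP j.
  have := psi1_lat0; rewrite Vinv_toR -toR_mul => /inLat_toR[c ->].
  by exists (c - n 0%N); rewrite mulmxBr.
have j_range : (1 <= j < L)%N by rewrite j_gt0 jL.
have [_] := varpi_rem j_range; rewrite recovered_diffE // Vinv_toR -toR_mul -toR_sub.
move=> /inLat_toR[c1 c1E].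
have := psi1_lat j_range; rewrite Vinv_toR -toR_mul -toR_sub => /inLat_toR[c2 c2E].
exists (c2 - c1 - n j); rewrite !mulmxBr -c1E -c2E opprB addrA subrK opprB.
by rewrite addrA addrAC addrK.
Qed.

Lemma psi1_eq_true : psi1 = psi1_true.
Proof.
set A := Vi *m Gam 0%N *m Gprod *m U1.
have U1_unitmx := unimodular_unitmx U1_unimodular.
have dA : \det A != 0.
  rewrite !det_mulmx !mulf_neq0 ?Gam_nonsingular //.
  - by apply: unitmx_det_neq0; rewrite unitmx_inv.
  - apply: bigmulmx_det_neq0 => i; rewrite mem_index_iota => /andP[_].
    exact: Gam_nonsingular.
  - exact: unimodular_det_neq0.
have [c cE] : exists c, V *m (psi1 - psi1_true) = \big[mulmx/1%:M]_(0 <= i < L) Gam i *m c.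
  apply: bigmulmx_dvd; first exact: iota_uniq.
  - by move=> i; rewrite mem_index_iota => /andP[_]; apply: Gam_nonsingular.
  - move=> i j; rewrite !mem_index_iota => /andP[_ iL] /andP[_ jL] /eqP.
    exact: Gam_comm_coprime.
  - move=> i; rewrite mem_index_iota => /andP[_ iL].
    by have [c ->] := psi1_congr_Gam iL; exists c; rewrite !mulmxA mulmxV ?mul1mx.
apply: (inN_uniq (R := R) (k := invmx U1 *m c) dA).
- by rewrite /A !toR_mul -Vinv_toR.
- have [x [x01 xE]] := m_in_A1.
  rewrite (folding L_gt0) floorv_folding in xE; last first.
  + by case: r0_rem.
  + by rewrite det_mulmx mulf_neq0 // Gam_nonsingular.
  by exists x; split => //; rewrite /A [LHS]toR_mul xE !toR_mul !mulmxA.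
- rewrite /A -(mulKmx V_unitmx (_ - _)) cE big_ltn // -!mulmxA.
  by rewrite mulKVmx.
Qed.

Lemma folding_of_theta_eq0 i : (i < L)%N -> nt i = toR (n i).
Proof.
move=> iL /=; case: eqP => [->|/eqP i_neq0].
  by apply/(folding_recovered_iff _ L_gt0); rewrite psi1_eq_true.
apply/(folding_recovered_iff _ iL).
rewrite recovered_diffE; last by rewrite lt0n i_neq0.
by rewrite psi1_eq_true -toR_sub opprB addrC subrK.
Qed.

End CorrectFolding.
End Algorithm2.

Lemma avg_addl (K : numFieldType) (W : lmodType K) (a : W) (f : nat -> W) L :
  (0 < L)%N ->
  L%:R^-1 *: \sum_(0 <= i < L) (a + f i) = a + L%:R^-1 *: \sum_(0 <= i < L) f i.
Proof.
move=> L_gt0; rewrite big_split /= sumr_const_nat subn0 scalerDr -scaler_nat scalerA.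
by rewrite mulVf ?pnatr_eq0 -?lt0n // scale1r.
Qed.

(* Indices: paper's i = 1..L corresponds to i = 0..L-1 here. *)
Theorem theorem4
  (R : archiFieldType) (D : nat) (nrm : 'cV[R]_D -> R)
  (M : 'M[int]_D) (L : nat) (Gam : nat -> 'M[int]_D)
  (U V Lam U1 : 'M[int]_D)
  (Q : 'cV[R]_D -> 'cV[R]_D) (lam : R)
  (m : 'cV[int]_D) (r n dr : nat -> 'cV[int]_D)
  (varpi : nat -> 'cV[int]_D) (psi1 : 'cV[int]_D) :
  is_norm nrm ->
  (2 <= L)%N ->
  nonsingular M ->
  (forall i, (i < L)%N -> nonsingular (Gam i)) ->
  (forall i j, (i < L)%N -> (j < L)%N -> i <> j ->
     Gam i *m Gam j = Gam j *m Gam i /\ mx_coprime (Gam i) (Gam j)) ->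
  unimodular U -> unimodular V -> smith_diag Lam -> U *m M *m V = Lam ->
  unimodular U1 ->
  is_closest_map nrm (toR Lam) Q ->
  is_lat_min nrm (toR Lam) lam ->
  let Mi i := M *m Gam i in
  let Gprod := \big[mulmx/1%:M]_(1 <= i < L) Gam i in
  (* m in A_1 *)
  inN (R:=R) (toR (Gprod *m U1)) (floorv (R:=R) (invmx (toR (Mi 0%N)) *m toR m)) ->
  (* remainders and folding vectors *)
  (forall i, (i < L)%N -> isRem (R:=R) (toR (Mi i)) (toR m) (r i)) ->
  (forall i, (i < L)%N -> m = Mi i *m n i + r i) ->
  (* erroneous remainders *)
  let rt i := r i + dr i in
  (* Algorithm 2 *)
  let p i := Q (toR U *m toR (rt i - rt 0%N)) in
  let Vinv := invmx (toR V) in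
  (forall i, (1 <= i < L)%N ->
     isRem (Vinv *m toR (Gam i)) (invmx (toR Lam) *m p i) (varpi i)) ->
  inN (Vinv *m toR (Gam 0%N) *m toR Gprod *m toR U1) psi1 ->
  inLat (Vinv *m toR (Gam 0%N)) (toR psi1) ->
  (forall i, (1 <= i < L)%N ->
     inLat (Vinv *m toR (Gam i)) (toR psi1 - toR (varpi i))) ->
  let nt i := if i == 0%N then invmx (toR (Gam 0%N)) *m toR V *m toR psi1
              else invmx (toR (Gam i)) *m toR V *m
                     (toR psi1 - invmx (toR Lam) *m p i) in
  let theta i := Q (toR U *m toR (dr i - dr 0%N)) in
  ((forall i, (i < L)%N -> nt i = toR (n i)) <->
   (forall i, (1 <= i < L)%N -> theta i = 0)) /\
  ((forall i, (1 <= i < L)%N -> nrm (toR U *m toR (dr i - dr 0%N)) < lam / 2) ->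
   forall i, (1 <= i < L)%N -> theta i = 0) /\
  (forall tau c, is_opnorm nrm (toR U) c ->
   (forall i, (i < L)%N -> nrm (toR (dr i)) <= tau) ->
   tau < lam / (4 * c) ->
   forall i, (1 <= i < L)%N -> theta i = 0) /\
  (forall tau, (forall i, (i < L)%N -> nrm (toR (dr i)) <= tau) ->
   let mt := L%:R^-1 *: \sum_(0 <= i < L) toR (Mi i *m n i + rt i) in
   nrm (mt - toR m) <= tau).
Proof.
move=> nrm_norm L_ge2 M_ns Gam_ns Gam_cc U_um V_um _ smithE U1_um Q_closest lam_min
  Mi Gprod m_A1 rem folding rt p Vinv varpi_rem psi1_N psi1_lat0 psi1_lat nt theta.
have L_gt0 : (0 < L)%N by apply: leq_trans L_ge2.
have [_ [_ Q_translate]] := Q_closest.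
have small_theta0 :
    (forall i, (1 <= i < L)%N -> nrm (toR U *m toR (dr i - dr 0%N)) < lam / 2) ->
    forall i, (1 <= i < L)%N -> theta i = 0.
  by move=> small i /small; exact: (closest_map_eq0 nrm_norm Q_closest lam_min).
split; [split|split; [exact: small_theta0|split]].
- exact: (theta_eq0_of_folding L_gt0 M_ns Gam_ns U_um V_um smithE Q_translate folding).
- exact: (folding_of_theta_eq0 L_gt0 M_ns Gam_ns Gam_cc U_um V_um U1_um smithE
    Q_translate m_A1 (rem 0%N L_gt0) folding varpi_rem psi1_N psi1_lat0 psi1_lat).
- move=> tau c U_c dr_le tau_lt; apply: small_theta0 => i /andP[_ iL].
  rewrite toR_sub; exact: (opnorm_diff_lt nrm_norm U_c (lat_min_ge0 nrm_norm lam_min)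
    (dr_le i iL) (dr_le 0%N L_gt0) tau_lt).
- move=> tau dr_le /=.
  rewrite (eq_big_nat _ _ (F2 := fun i => toR m + toR (dr i))) => [|i /andP[_ iL]].
    by rewrite avg_addl // addrC addKr; apply: normv_avg_le.
  by rewrite /rt addrA -(folding i iL) toR_add.
Qed.
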